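(* For every $m\ge1$, $\mathrm{PBTD}(\mathrm{QR}^1_{\infty,m})=2$. If $z\ge2$, then $\mathrm{PBTD}(\mathrm{QR}^z_{\infty,m})\ge2$.
   Context: Fix a countably infinite set $X$ of variables and an alphabet $\Sigma$ (finite or countably infinite, disjoint from $X$), $z=|\Sigma|$. A pattern is a nonempty finite string over $X\cup\Sigma$. A substitution is a morphism $h:(X\cup\Sigma)^*\to\Sigma^*$ fixing letters; $L(\pi)$ (erasing pattern language) is the set of all $h(\pi)$; patterns with equal languages are identified. A pattern is $m$-quasi-regular if every variable occurring in it occurs exactly $m$ times (patterns without variables are included); $\mathrm{QR}^z_{\infty,m}$ is the class of $m$-quasi-regular patterns over an alphabet of size $z$. A labelled example is $(w,\pm)$ with $w\in\Sigma^*$; a teaching set for $\pi$ w.r.t. a class $\Pi$ is a set $T$ of labelled examples consistent with $\pi$ such that every $\tau\in\Pi$ consistent with $T$ has $L(\tau)=L(\pi)$. For a strict partial order $\prec$ on $\Pi$, a teaching set for $\pi$ w.r.t. $(\Pi,\prec)$ is a teaching set for $\pi$ w.r.t. $\Pi\setminus\{\pi':\pi'\prec\pi\}$; $\mathrm{PBTD}(\Pi,\prec)$ is the supremum over $\pi\in\Pi$ of the minimum size of such sets, and $\mathrm{PBTD}(\Pi)=\inf_\prec\mathrm{PBTD}(\Pi,\prec)$. *)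

From mathcomp Require Import all_boot.
Set Implicit Arguments. Unset Strict Implicit. Unset Printing Implicit Defensive.

Section Patterns.
Variable Sigma : countType.

(* Variables X = nat; a pattern symbol is a variable (inl x) or a letter (inr a). *)
Definition symbol := (nat + Sigma)%type.
Definition pattern := seq symbol.

Definition subst (h : nat -> seq Sigma) (p : pattern) : seq Sigma :=
  flatten (map (fun s => match s with inl x => h x | inr a => [:: a] end) p).

Definition lang (p : pattern) (w : seq Sigma) : Prop := exists h, subst h p = w.

Definition lang_eq (p q : pattern) : Prop := forall w, lang p w <-> lang q w.

Definition quasi_regular (m : nat) (p : pattern) : Prop :=
  p <> [::] /\
  forall x : nat, count (pred1 (inl x : symbol)) p = 0 \/
                  count (pred1 (inl x : symbol)) p = m.

(* Strict partial order on the class C of patterns, where patterns with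
   equal languages are identified: the relation is compatible with
   language equality, irreflexive and transitive on C. *)
Definition strict_po (C : pattern -> Prop) (prec : pattern -> pattern -> Prop) :=
  (forall p p' q q', C p -> C p' -> C q -> C q' ->
      lang_eq p p' -> lang_eq q q' -> prec p q -> prec p' q') /\
  (forall p, C p -> ~ prec p p) /\
  (forall p q r, C p -> C q -> C r -> prec p q -> prec q r -> prec p r).

(* Labelled examples (w, true) = (w,+), (w, false) = (w,-). *)
Definition consistent (T : seq (seq Sigma * bool)) (p : pattern) : Prop :=
  forall w b, (w, b) \in T -> (lang p w <-> b = true).

Definition teaching_set (C : pattern -> Prop) (prec : pattern -> pattern -> Prop)
    (p : pattern) (T : seq (seq Sigma * bool)) : Prop :=
  consistent T p /\
  forall q, C q -> ~ prec q p -> consistent T q -> lang_eq q p.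

Definition PBTD_le (C : pattern -> Prop) (prec : pattern -> pattern -> Prop) (k : nat) :=
  forall p, C p -> exists T, size T <= k /\ teaching_set C prec p T.

Definition PBTD_ge (C : pattern -> Prop) (k : nat) :=
  forall prec, strict_po C prec -> ~ PBTD_le C prec k.-1.

(* PBTD(C) = k  (for k >= 1); the infimum over orders of a N u {oo}-valued
   quantity is attained, so this is: some order achieves <= k, none achieves <= k-1. *)
Definition PBTD_eq (C : pattern -> Prop) (k : nat) :=
  (exists prec, strict_po C prec /\ PBTD_le C prec k) /\ PBTD_ge C k.

End Patterns.

(* The class QR^z_{oo,m} over alphabet Sigma (z = #Sigma). *)
Definition QR (Sigma : countType) (m : nat) : pattern Sigma -> Prop :=
  @quasi_regular Sigma m.
Arguments QR : clear implicits.

(* Upper bound for a one-letter alphabet: order patterns by strict inclusion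
   of languages, more general patterns first.  An m-quasi-regular pattern p
   with a variable generates exactly the words of length |w0| + m t, where w0
   is its erasing image; the positive examples w0 and w0 a^m force any pattern
   not preceding p to have a variable and to generate all of them, hence to be
   equivalent to p.  A constant pattern w0 is taught by (w0,+) and (w0 a^m,-).

   Lower bound: teaching a x^m with one example puts some constant pattern
   w0 of its language before it; the single example teaching w0 must then be
   a negative one (w,-).  Every other word v of the language gives a constant
   pattern before w0, whose single example is forced to be (w0,-).  Two such
   patterns v1, v2 are then each consistent with the other's teaching set, so
   each precedes the other. *)
From mathcomp Require Import all_boot.
From mathcomp Require Import zify.
From Stdlib Require Import Classical.
Set Implicit Arguments. Unset Strict Implicit. Unset Printing Implicit Defensive.

Section Substitutions.
Variable Sigma : countType.
Implicit Types (p q : pattern Sigma) (h : nat -> seq Sigma) (w u : seq Sigma).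

Definition erasing : nat -> seq Sigma := fun=> [::].

Definition isvar (s : symbol Sigma) : bool := if s is inl _ then true else false.

Definition var_size h (s : symbol Sigma) : nat :=
  if s is inl x then size (h x) else 0.

Definition const_pattern w : pattern Sigma := map inr w.

Lemma subst_cons h s p : subst h (s :: p) =
  (match s with inl x => h x | inr a => [:: a] end) ++ subst h p.
Proof. by []. Qed.

Lemma size_subst h p :
  size (subst h p) = size (subst erasing p) + \sum_(s <- p) var_size h s.
Proof.
elim: p => [|s p IH]; first by rewrite big_nil.
by rewrite big_cons !subst_cons !size_cat IH; case: s => [x|a] /=; lia.
Qed.

Lemma size_subst_extend h y u p :
  size (subst [eta h with y |-> h y ++ u] p) =
  size (subst h p) + count (pred1 (inl y)) p * size u.
Proof.
rewrite (size_subst _ p) (size_subst h) -addnA; congr (_ + _).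
elim: p => [|s p IH]; first by rewrite !big_nil.
rewrite !big_cons IH /=; case: s => [x|a] /=; last by rewrite add0n.
case: eqP => [->|ne]; first by rewrite eqxx size_cat; lia.
have -> : (inl x == inl y :> symbol Sigma) = false by apply/eqP => -[].
lia.
Qed.

Lemma subst_novar h p : ~~ has isvar p -> subst h p = subst erasing p.
Proof. by elim: p => [|[x|a] p IH] //= novar; rewrite !subst_cons IH. Qed.

Lemma lang_novar p w : ~~ has isvar p -> lang p w <-> w = subst erasing p.
Proof.
move=> novar; split => [[h <-]|->]; first exact: subst_novar.
by exists erasing.
Qed.

Lemma lang_const_pattern w u : lang (const_pattern w) u <-> u = w.
Proof.
have subst_const h : subst h (const_pattern w) = w.
  by elim: w => //= a w IH; rewrite subst_cons IH.
by split => [[h <-]|->]; [rewrite subst_const | exists erasing].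
Qed.

Lemma const_pattern_inj w u :
  lang_eq (const_pattern w) (const_pattern u) -> w = u.
Proof. by move=> E; apply/lang_const_pattern/E/lang_const_pattern. Qed.

Lemma lang_eq_sym p q : lang_eq p q -> lang_eq q p.
Proof. by move=> E w; split=> /E. Qed.

Definition infinite_lang p : Prop :=
  forall s : seq (seq Sigma), exists2 w, lang p w & w \notin s.

Lemma infinite_lang_not_const p w :
  infinite_lang p -> ~ lang_eq (const_pattern w) p.
Proof.
move=> inf E; have [u p_u] := inf [:: w].
by rewrite mem_seq1 => /eqP; apply; apply/lang_const_pattern/E.
Qed.

Lemma consistent1 w b p : consistent [:: (w, b)] p <-> (lang p w <-> b = true).
Proof.
split=> [cons|cons w' b']; first by apply: cons; rewrite inE.
by rewrite inE => /eqP[-> ->].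
Qed.

Lemma consistent_pair w1 b1 w2 b2 p :
  consistent [:: (w1, b1); (w2, b2)] p <->
  (lang p w1 <-> b1 = true) /\ (lang p w2 <-> b2 = true).
Proof.
split=> [cons|[cons1 cons2] w b].
  by split; apply: cons; rewrite !inE eqxx ?orbT.
by rewrite !inE => /orP[] /eqP[-> ->].
Qed.

Variable m : nat.

Lemma quasi_regular_const w : w != [::] -> quasi_regular m (const_pattern w).
Proof.
move=> nonempty; split; first by case: w nonempty.
by move=> x; left; elim: w {nonempty} => //= a w ->.
Qed.

Lemma quasi_regular_var p :
  quasi_regular m p -> has isvar p -> exists y, count (pred1 (inl y)) p = m.
Proof.
move=> [_ counts] /hasP[[y|a] y_in] // _; exists y.
case: (counts y) => // count0.
have : inl y \in p by [].
by rewrite -has_pred1 has_count count0.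
Qed.

Lemma quasi_regular_size_subst p h : quasi_regular m p ->
  exists t, size (subst h p) = size (subst erasing p) + m * t.
Proof.
move=> [_ counts]; rewrite size_subst.
suff /dvdnP[t ->] : m %| \sum_(s <- p) var_size h s by exists t; rewrite mulnC.
rewrite -big_undup_iterop_count; apply: dvdn_sum => -[x|a] _;
  rewrite Monoid.iteropE iter_addn_0 ?muln0 //.
by case: (counts x) => ->; rewrite ?muln0 ?dvdn_mull.
Qed.

End Substitutions.

Arguments erasing {Sigma}.
Arguments isvar {Sigma} s.

Section OneLetterAlphabet.
Variable Sigma : countType.
Variable a : Sigma.
Hypothesis only_a : forall b : Sigma, b = a.
Variable m : nat.
Hypothesis m_gt0 : 0 < m.
Implicit Types (p q : pattern Sigma) (w u v : seq Sigma).

Lemma eq_unary u v : size u = size v -> u = v.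
Proof.
elim: u v => [|x u IH] [|y v] //= [] /IH ->.
by rewrite (only_a x) (only_a y).
Qed.

Lemma lang_pump q u v t : quasi_regular m q -> has isvar q ->
  lang q u -> size v = size u + m * t -> lang q v.
Proof.
move=> qr_q /(quasi_regular_var qr_q)[y count_y] [g <-] size_v.
exists [eta g with y |-> g y ++ nseq t a]; apply: eq_unary.
by rewrite size_subst_extend count_y size_nseq size_v.
Qed.

Lemma lang_incl_of_erasing p q : quasi_regular m p -> quasi_regular m q ->
  has isvar q -> lang q (subst (@erasing Sigma) p) ->
  forall w, lang p w -> lang q w.
Proof.
move=> qr_p qr_q var_q erasing_in w [h <-].
have [t size_w] := quasi_regular_size_subst h qr_p.
exact: lang_pump erasing_in size_w.
Qed.

Definition more_general q p : Prop :=
  (forall w, lang p w -> lang q w) /\ ~ (forall w, lang q w -> lang p w).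

Lemma more_general_strict_po (C : pattern Sigma -> Prop) :
  strict_po C more_general.
Proof.
split; [|split].
- move=> p p' q q' _ _ _ _ Ep Eq [pq not_qp]; split; first by move=> w /Eq/pq/Ep.
  by move=> qp; apply: not_qp => w /Ep/qp/Eq.
- by move=> p _ [_ []].
- move=> p q r _ _ _ [qp not_pq] [rq not_qr]; split; first by move=> w /rq/qp.
  by move=> pr; apply: not_qr => w /qp/pr.
Qed.

Lemma PBTD_le_more_general : PBTD_le (QR Sigma m) more_general 2.
Proof.
move=> p qr_p; set w0 := subst erasing p.
have [var_p|novar_p] := boolP (has isvar p).
- have lang_p w : lang p w <-> exists t, size w = size w0 + m * t.
    split=> [[h <-]|[t size_w]]; first exact: quasi_regular_size_subst.
    by apply: lang_pump size_w => //; exists erasing.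
  exists [:: (w0, true); (w0 ++ nseq m a, true)]; split => //; split.
    apply/consistent_pair; rewrite !lang_p; split; split => // _.
      by exists 0; rewrite muln0 addn0.
    by exists 1; rewrite size_cat size_nseq muln1.
  move=> q qr_q not_more_general.
  move=> /consistent_pair[[_ /(_ erefl) w0_in] [_ /(_ erefl) w1_in]].
  have var_q : has isvar q.
    apply/negPn/negP => novar_q.
    move/(lang_novar _ novar_q): w0_in => w0_eq.
    move/(lang_novar _ novar_q): w1_in; rewrite -w0_eq => /(f_equal size).
    by rewrite size_cat size_nseq; lia.
  have sub := lang_incl_of_erasing qr_p qr_q var_q w0_in.
  apply: NNPP => not_eq; apply: not_more_general; split => // sup.
  by apply: not_eq => w; split; [apply: sup | apply: sub].
- have lang_p w : lang p w <-> w = w0 by exact: lang_novar.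
  exists [:: (w0, true); (w0 ++ nseq m a, false)]; split => //; split.
    apply/consistent_pair; rewrite !lang_p; split; split => // /(f_equal size).
    by rewrite size_cat size_nseq; lia.
  move=> q qr_q _ /consistent_pair[[_ /(_ erefl) w0_in] [w1_notin _]].
  have novar_q : ~~ has isvar q.
    apply/negP => var_q; have /w1_notin // : lang q (w0 ++ nseq m a).
    by apply: (lang_pump (t := 1)) w0_in _; rewrite ?size_cat ?size_nseq ?muln1.
  move: w0_in => /(lang_novar _ novar_q) erasing_q w.
  by rewrite lang_p (lang_novar _ novar_q) erasing_q.
Qed.

End OneLetterAlphabet.

Section LowerBound.
Variable Sigma : countType.
Variable C : pattern Sigma -> Prop.
Variable prec : pattern Sigma -> pattern Sigma -> Prop.
Hypothesis prec_po : strict_po C prec.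
Hypothesis teach_le1 : PBTD_le C prec 1.
Variable Q : pattern Sigma.
Hypothesis C_Q : C Q.
Hypothesis C_const : forall w, lang Q w -> C (const_pattern w).
Hypothesis Q_infinite : infinite_lang Q.
Implicit Types (p q : pattern Sigma) (w u v : seq Sigma).

Lemma prec_asym p q : C p -> C q -> prec p q -> ~ prec q p.
Proof.
have [_ [irr trans]] := prec_po.
by move=> Cp Cq pq qp; apply: (irr p Cp); apply: (trans p q p).
Qed.

Lemma prec_cycle3 p q r : C p -> C q -> C r -> prec p q -> prec q r -> ~ prec r p.
Proof.
have [_ [_ trans]] := prec_po.
by move=> Cp Cq Cr pq qr; apply: prec_asym => //; apply: (trans p q r).
Qed.

Lemma teaching_example p : C p -> exists w b, teaching_set C prec p [:: (w, b)].
Proof.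
move=> Cp; have [[|[w b] [|e T]] [size_T [cons teach]]] := teach_le1 Cp => //.
  exists (subst erasing p), true; split.
    by apply/consistent1; split => // _; exists erasing.
  by move=> q Cq not_prec _; apply: teach => // ? ?; rewrite in_nil.
by exists w, b.
Qed.

Lemma teaching_forces p w b q : teaching_set C prec p [:: (w, b)] -> C q ->
  (lang q w <-> b = true) -> ~ lang_eq q p -> prec q p.
Proof.
move=> [_ teach] Cq /consistent1 cons neq.
by apply: NNPP => not_prec; apply: neq (teach q Cq not_prec cons).
Qed.

Lemma const_before_Q : exists2 w0, lang Q w0 & prec (const_pattern w0) Q.
Proof.
have [w [b teachQ]] := teaching_example C_Q.
have /consistent1 Q_w := teachQ.1.
case: b Q_w teachQ => Q_w teachQ.
  have {}Q_w : lang Q w by apply/Q_w.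
  exists w => //; apply: (teaching_forces teachQ (C_const Q_w)).
    by split=> // _; apply/lang_const_pattern.
  exact: infinite_lang_not_const.
have [w0 Q_w0] := Q_infinite [:: w]; rewrite mem_seq1 => /eqP w0_ne_w.
exists w0 => //; apply: (teaching_forces teachQ (C_const Q_w0)).
  by split=> // /lang_const_pattern/esym.
exact: infinite_lang_not_const.
Qed.

Lemma const_teacher w0 : lang Q w0 -> prec (const_pattern w0) Q ->
  exists2 w, w <> w0 & teaching_set C prec (const_pattern w0) [:: (w, false)].
Proof.
move=> Q_w0 before_Q; have [w [b teach0]] := teaching_example (C_const Q_w0).
have /consistent1 cons0 := teach0.1.
case: b cons0 teach0 => cons0 teach0; last first.
  exists w => // w_eq.
  by have /cons0 // : lang (const_pattern w0) w by apply/lang_const_pattern.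
have w_eq : w = w0 by apply/lang_const_pattern/cons0.
case: (prec_asym (C_const Q_w0) C_Q before_Q).
apply: (teaching_forces teach0 C_Q); first by rewrite w_eq.
by move/lang_eq_sym; apply: infinite_lang_not_const.
Qed.

Section AfterConstTeacher.
Variables w0 w : seq Sigma.
Hypothesis Q_w0 : lang Q w0.
Hypothesis before_Q : prec (const_pattern w0) Q.
Hypothesis teach0 : teaching_set C prec (const_pattern w0) [:: (w, false)].

Lemma const_before_w0 v : lang Q v -> v <> w -> v <> w0 ->
  prec (const_pattern v) (const_pattern w0).
Proof.
move=> Q_v v_ne_w v_ne_w0; apply: (teaching_forces teach0 (C_const Q_v)).
  by split=> // /lang_const_pattern/esym.
by move/const_pattern_inj.
Qed.

Lemma const_teacher_w0 v : lang Q v -> v <> w -> v <> w0 ->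
  teaching_set C prec (const_pattern v) [:: (w0, false)].
Proof.
move=> Q_v v_ne_w v_ne_w0; have before_w0 := const_before_w0 Q_v v_ne_w v_ne_w0.
have [u [b teach_v]] := teaching_example (C_const Q_v).
have /consistent1 cons_v := teach_v.1.
case: b cons_v teach_v => cons_v teach_v.
  have u_eq : u = v by apply/lang_const_pattern/cons_v.
  case: (prec_cycle3 C_Q (C_const Q_v) (C_const Q_w0) _ before_w0 before_Q).
  apply: (teaching_forces teach_v C_Q); first by rewrite u_eq.
  by move/lang_eq_sym; apply: infinite_lang_not_const.
suff u_eq : u = w0 by rewrite -u_eq.
apply: NNPP => u_ne_w0.
apply: (prec_asym (C_const Q_v) (C_const Q_w0) before_w0).
apply: (teaching_forces teach_v (C_const Q_w0)).
  by split=> // /lang_const_pattern/u_ne_w0.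
by move/const_pattern_inj/esym.
Qed.

Lemma const_prec_const v v' : lang Q v -> lang Q v' ->
  v <> w -> v <> w0 -> v' <> w -> v' <> w0 -> v <> v' ->
  prec (const_pattern v) (const_pattern v').
Proof.
move=> Q_v Q_v' v_ne_w v_ne_w0 v'_ne_w v'_ne_w0 v_ne_v'.
apply: (teaching_forces (const_teacher_w0 Q_v' v'_ne_w v'_ne_w0) (C_const Q_v)).
  by split=> // /lang_const_pattern/esym.
by move/const_pattern_inj.
Qed.

Lemma const_teachers_collide : False.
Proof.
have [v1 Q_v1] := Q_infinite [:: w; w0].
rewrite !inE => /norP[/eqP v1_ne_w /eqP v1_ne_w0].
have [v2 Q_v2] := Q_infinite [:: w; w0; v1].
rewrite !inE => /norP[/eqP v2_ne_w /norP[/eqP v2_ne_w0 /eqP v2_ne_v1]].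
apply: (prec_asym (C_const Q_v1) (C_const Q_v2)); apply: const_prec_const => //.
exact: nesym.
Qed.

End AfterConstTeacher.

Lemma no_teaching_sets_of_size1 : False.
Proof.
have [w0 Q_w0 before_Q] := const_before_Q.
have [w _ teach0] := const_teacher Q_w0 before_Q.
exact: const_teachers_collide Q_w0 before_Q teach0.
Qed.

End LowerBound.

Lemma PBTD_ge2_infinite_lang (Sigma : countType) (C : pattern Sigma -> Prop)
    (Q : pattern Sigma) :
  C Q -> (forall w, lang Q w -> C (const_pattern w)) -> infinite_lang Q ->
  PBTD_ge C 2.
Proof.
move=> C_Q C_const Q_infinite prec prec_po teach_le1.
exact: (no_teaching_sets_of_size1 prec_po teach_le1 C_Q C_const Q_infinite).
Qed.

Section PowerPattern.
Variable Sigma : countType.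
Variable a : Sigma.
Variable m : nat.
Hypothesis m_gt0 : 0 < m.

Definition power_pattern : pattern Sigma := inr a :: nseq m (inl 0).

Lemma quasi_regular_power_pattern : quasi_regular m power_pattern.
Proof.
split=> // x; rewrite /= count_nseq /=.
case: (x =P 0) => [->|x_ne0]; first by right; rewrite eqxx mul1n.
left; have -> : (inl 0 == inl x :> symbol Sigma) = false.
  by apply/eqP => -[/esym].
by rewrite mul0n.
Qed.

Lemma size_subst_power_pattern k :
  size (subst (fun=> nseq k a) power_pattern) = 1 + m * k.
Proof.
rewrite subst_cons size_cat /=; congr (1 + _).
by elim: m => //= n IH; rewrite subst_cons size_cat IH size_nseq mulSn.
Qed.

Lemma infinite_lang_power_pattern : infinite_lang power_pattern.
Proof.
move=> s; pose k := \max_(u <- s) size u.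
have size_le u : u \in s -> size u <= k by move=> u_in; apply: leq_bigmax_seq.
exists (subst (fun=> nseq k a) power_pattern); first by eexists.
by apply/negP => /size_le; rewrite size_subst_power_pattern; nia.
Qed.

Lemma PBTD_ge2_QR : PBTD_ge (QR Sigma m) 2.
Proof.
apply: (PBTD_ge2_infinite_lang quasi_regular_power_pattern).
  by move=> w [h <-]; apply: quasi_regular_const.
exact: infinite_lang_power_pattern.
Qed.

End PowerPattern.

Theorem mainTheorem10 :
  forall m : nat, 1 <= m ->
    (forall Sigma : countType, (exists a : Sigma, forall b : Sigma, b = a) ->
       PBTD_eq (QR Sigma m) 2) /\
    (forall Sigma : countType, (exists a b : Sigma, a <> b) ->
       PBTD_ge (QR Sigma m) 2).
Proof.
move=> m m_gt0; split=> [Sigma [a only_a] | Sigma [a _]].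
  split; last exact: (PBTD_ge2_QR a m_gt0).
  exists (@more_general Sigma); split; first exact: more_general_strict_po.
  exact: PBTD_le_more_general.
exact: (PBTD_ge2_QR a m_gt0).
Qed.
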